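(* Let $\lambda_1\ge\lambda_2\ge\lambda_3>\lambda_4=0$ with $\lambda_1+\lambda_2+\lambda_3=1$, and let $$\rho_{\vec\lambda}=\lambda_1\Phi_1+\lambda_2|01\rangle\langle01|+\lambda_3\Phi_2,\qquad \sigma_{\vec\lambda}=\lambda_1\Phi_1+\lambda_2\Phi_2+\lambda_3\Phi_3.$$ If $2\lambda_1-\lambda_2>1$ and $\lambda_2>\lambda_3$, then there exists no non-entangling map $\Lambda:\mathcal{D}\to\mathcal{D}$ such that $\Lambda(\rho_{\vec\lambda})=\sigma_{\vec\lambda}$.
   Context: $\mathcal{D}$ is the set of two-qubit density matrices on $\mathbb{C}^2\otimes\mathbb{C}^2$ (Hermitian, positive semidefinite, trace one $4\times4$ matrices), written in the computational basis $\{|ij\rangle\}_{i,j\in\{0,1\}}$. The Bell vectors are $|\Phi_1\rangle=\frac{1}{\sqrt2}(|00\rangle+|11\rangle)$, $|\Phi_2\rangle=\frac{1}{\sqrt2}(|00\rangle-|11\rangle)$, $|\Phi_3\rangle=\frac{1}{\sqrt2}(|10\rangle+|01\rangle)$, $|\Phi_4\rangle=\frac{1}{\sqrt2}(|10\rangle-|01\rangle)$, and $\Phi_i=|\Phi_i\rangle\langle\Phi_i|$. A state is separable if it is a convex combination of product states $|\phi\rangle\langle\phi|\otimes|\chi\rangle\langle\chi|$. A map $\Lambda:\mathcal{D}\to\mathcal{D}$ is non-entangling (NE) if it is completely positive and trace preserving and maps every separable state to a separable state. *)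

From HB Require Import structures.
From mathcomp Require Import all_boot all_order all_algebra.
From mathcomp Require Import reals.
From mathcomp.real_closed Require Import complex mxtens.

Set Implicit Arguments.
Unset Strict Implicit.
Unset Printing Implicit Defensive.
Import Order.TTheory GRing.Theory Num.Theory.
Local Open Scope ring_scope.
Local Open Scope complex_scope.

Section QuantumDefs.
Variable R : realType.
Local Notation C := R[i].

Definition adjmx {m n} (A : 'M[C]_(m, n)) : 'M[C]_(n, m) :=
  \matrix_(i, j) (A j i)^*.

(* Hermitian / positive semidefinite operators, for matrices indexed by an
   arbitrary finite type (needed for amplifications C^k (x) C^4). *)
Definition hermitian_fun (I : finType) (X : I -> I -> C) : Prop :=
  forall i j, X j i = (X i j)^*.

Definition psd_fun (I : finType) (X : I -> I -> C) : Prop :=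
  hermitian_fun X /\
  forall v : I -> C, 0 <= \sum_(i : I) \sum_(j : I) (v i)^* * X i j * v j.

Definition psd {n} (A : 'M[C]_n) : Prop := psd_fun (fun i j => A i j).

(* Two-qubit density matrices: Hermitian, PSD, trace one 4x4 matrices,
   in the computational basis |ij> indexed by 2 i + j (mxtens_index). *)
Definition density (A : 'M[C]_4) : Prop :=
  (forall i j, A j i = (A i j)^*) /\ psd A /\ \tr A = 1.

Definition ketbra {n} (v : 'cV[C]_n) : 'M[C]_n := v *m adjmx v.

Definition unit_vec {n} (v : 'cV[C]_n) : Prop := (adjmx v *m v) 0 0 = 1.

Definition product_state (A : 'M[C]_4) : Prop :=
  exists (phi chi : 'cV[C]_2), unit_vec phi /\ unit_vec chi /\
    A = ketbra phi *t ketbra chi.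

Definition separable (A : 'M[C]_4) : Prop :=
  exists (n : nat) (p : 'I_n -> R) (P : 'I_n -> 'M[C]_4),
    (forall k, 0 <= p k) /\ \sum_(k < n) p k = 1 /\
    (forall k, product_state (P k)) /\
    A = \sum_(k < n) (p k)%:C *: P k.

Definition linear_map (L : 'M[C]_4 -> 'M[C]_4) : Prop :=
  forall (a : C) (A B : 'M[C]_4), L (a *: A + B) = a *: L A + L B.

Definition trace_preserving (L : 'M[C]_4 -> 'M[C]_4) : Prop :=
  forall A, \tr (L A) = \tr A.

(* (id_k (x) L) applied to an operator X on C^k (x) C^4, block-wise. *)
Definition ampliate (k : nat) (L : 'M[C]_4 -> 'M[C]_4)
    (X : 'I_k * 'I_4 -> 'I_k * 'I_4 -> C) : 'I_k * 'I_4 -> 'I_k * 'I_4 -> C :=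
  fun ai bj => L (\matrix_(i, j) X (ai.1, i) (bj.1, j)) ai.2 bj.2.

Definition completely_positive (L : 'M[C]_4 -> 'M[C]_4) : Prop :=
  forall (k : nat) (X : 'I_k * 'I_4 -> 'I_k * 'I_4 -> C),
    psd_fun X -> psd_fun (ampliate L X).

Definition CPTP (L : 'M[C]_4 -> 'M[C]_4) : Prop :=
  linear_map L /\ completely_positive L /\ trace_preserving L.

Definition non_entangling (L : 'M[C]_4 -> 'M[C]_4) : Prop :=
  CPTP L /\ forall A, separable A -> separable (L A).

Definition ket (k : 'I_4) : 'cV[C]_4 := delta_mx k 0.
Definition ket00 : 'cV[C]_4 := ket (@Ordinal 4 0 isT).
Definition ket01 : 'cV[C]_4 := ket (@Ordinal 4 1 isT).
Definition ket10 : 'cV[C]_4 := ket (@Ordinal 4 2 isT).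
Definition ket11 : 'cV[C]_4 := ket (@Ordinal 4 3 isT).

(* Bell projectors Phi_i = |Phi_i><Phi_i|, with |Phi_i> = (..)/sqrt 2,
   so Phi_i = (1/2) |u><u| for the unnormalised u. *)
Definition Bell1 : 'M[C]_4 := (2%:R)^-1 *: ketbra (ket00 + ket11).
Definition Bell2 : 'M[C]_4 := (2%:R)^-1 *: ketbra (ket00 - ket11).
Definition Bell3 : 'M[C]_4 := (2%:R)^-1 *: ketbra (ket10 + ket01).
Definition Bell4 : 'M[C]_4 := (2%:R)^-1 *: ketbra (ket10 - ket01).

Definition rho_l (l1 l2 l3 : R) : 'M[C]_4 :=
  l1%:C *: Bell1 + l2%:C *: ketbra ket01 + l3%:C *: Bell2.

Definition sigma_l (l1 l2 l3 : R) : 'M[C]_4 :=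
  l1%:C *: Bell1 + l2%:C *: Bell2 + l3%:C *: Bell3.

End QuantumDefs.

(* Let f_k(X) = <Phi_k|X|Phi_k>. A non-entangling map L is positive and trace preserving,
   so the f_k(L X) are nonnegative and sum to tr X; on separable states f_1, f_2, f_3 are
   at most 1/2, by Cauchy-Schwarz on product vectors. Besides the product basis states and
   Phi_1 + Phi_2 = |00><00| + |11><11|, the states
     2x(1-x) Phi_j + (1-x)^2 |01><01| + x^2 |10><10|   (j = 1, 2, 0 <= x <= 1)
   are separable: they are phase-twirled product states. Evaluating f_1, f_2, f_4 on
   L(rho) = sigma gives linear relations between the fidelities of L(Phi_1), L(|01><01|)
   and L(Phi_2). Since 2 l1 - l2 > 1 means l1 - l3 > 2 l2, the f_1 relation together with
   the x = 1/2 state forces f_1(L |01><01|) = 0 and f_1(L Phi_1) = 1; then the trace and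
   f_4 relations give f_2(L |01><01|) = 1/2, and the f_2 relation gives
   f_2(L Phi_2) = l2 / (2 l3) > 1/2. But taking x small in the j = 2 family shows
   f_2(L Phi_2) <= 1/2. *)

From HB Require Import structures.
From mathcomp Require Import all_boot all_order all_algebra.
From mathcomp Require Import reals.
From mathcomp.real_closed Require Import complex mxtens.
From mathcomp Require Import ring lra.
Import Order.TTheory GRing.Theory Num.Theory.

Set Implicit Arguments.
Unset Strict Implicit.
Unset Printing Implicit Defensive.

Local Open Scope ring_scope.
Local Open Scope complex_scope.
Local Notation Re := complex.Re.
Local Notation Im := complex.Im.

Section ComplexFacts.
Variable R : realType.
Implicit Types (r : R) (z : R[i]).

Definition sqnormc z : R := Re z ^+ 2 + Im z ^+ 2.

Lemma Re_mulcJ z : Re (z * z^*%C) = sqnormc z.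
Proof. by case: z => a b; rewrite /sqnormc /=; ring. Qed.

Lemma Re_realM r z : Re (r%:C * z) = r * Re z.
Proof. by case: z => a b; simpc. Qed.

Lemma sqnormcN z : sqnormc (- z) = sqnormc z.
Proof. by case: z => a b; rewrite /sqnormc /= !sqrrN. Qed.

Lemma sqnormc_real r : sqnormc r%:C = r ^+ 2.
Proof. by rewrite /sqnormc /= expr0n /= addr0. Qed.

Lemma sqnormc_dot2_le (a b c d : R[i]) :
  sqnormc (a * c + b * d) <= (sqnormc a + sqnormc b) * (sqnormc c + sqnormc d).
Proof.
case: a b c d => [a1 a2] [b1 b2] [c1 c2] [d1 d2]; rewrite /sqnormc /= -subr_ge0.
(* Lagrange's identity *)
set X := a1 * d1 + a2 * d2 - (b1 * c1 + b2 * c2).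
set Y := a2 * d1 - a1 * d2 - (b2 * c1 - b1 * c2).
have -> : (a1 ^+ 2 + a2 ^+ 2 + (b1 ^+ 2 + b2 ^+ 2)) * (c1 ^+ 2 + c2 ^+ 2 + (d1 ^+ 2 + d2 ^+ 2))
    - ((a1 * c1 - a2 * c2 + (b1 * d1 - b2 * d2)) ^+ 2 + (a1 * c2 + a2 * c1 + (b1 * d2 + b2 * d1)) ^+ 2)
    = X ^+ 2 + Y ^+ 2 by rewrite /X /Y; ring.
by rewrite addr_ge0 ?sqr_ge0.
Qed.

Lemma real_complexM (x y : R) : (x * y)%:C = x%:C * y%:C :> R[i].
Proof. exact: rmorphM. Qed.

Lemma conjcM (x y : R[i]) : (x * y)^*%C = x^*%C * y^*%C.
Proof. exact: rmorphM. Qed.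

Lemma conjcN (x : R[i]) : (- x)^*%C = - x^*%C.
Proof. exact: rmorphN. Qed.

End ComplexFacts.

Section Expectation.
Variables (R : realType) (n : nat).
Local Notation C := R[i].
Implicit Types (u w : 'cV[C]_n) (P M : 'M[C]_n).

Definition ip u w : C := (adjmx u *m w) 0 0.

Lemma ipE u w : ip u w = \sum_i (u i 0)^*%C * w i 0.
Proof. by rewrite /ip mxE; under eq_bigr do rewrite mxE. Qed.

Lemma ketbraE u i j : ketbra u i j = u i 0 * (u j 0)^*%C.
Proof. by rewrite /ketbra mxE big_ord1 mxE. Qed.

Definition expect P M : R := Re (\tr (P *m M)).

Lemma expectDr P M N : expect P (M + N) = expect P M + expect P N.
Proof. by rewrite /expect mulmxDr mxtraceD raddfD. Qed.

Lemma expectZr P (r : R) M : expect P (r%:C *: M) = r * expect P M.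
Proof. by rewrite /expect -scalemxAr mxtraceZ Re_realM. Qed.

Lemma expectDl P Q M : expect (P + Q) M = expect P M + expect Q M.
Proof. by rewrite /expect mulmxDl mxtraceD raddfD. Qed.

Lemma expectZl (r : R) P M : expect (r%:C *: P) M = r * expect P M.
Proof. by rewrite /expect -scalemxAl mxtraceZ Re_realM. Qed.

Lemma expect_sumr P m (p : 'I_m -> R) (M : 'I_m -> 'M[C]_n) :
  expect P (\sum_k (p k)%:C *: M k) = \sum_k p k * expect P (M k).
Proof.
have expect0 : expect P 0 = 0 by rewrite /expect mulmx0 mxtrace0.
rewrite (big_morph _ (expectDr P) expect0).
by apply: eq_bigr => k _; rewrite expectZr.
Qed.

Lemma expect_comb3 P (a1 a2 a3 : R) M1 M2 M3 :
  expect P (a1%:C *: M1 + a2%:C *: M2 + a3%:C *: M3)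
  = a1 * expect P M1 + a2 * expect P M2 + a3 * expect P M3.
Proof. by rewrite !expectDr !expectZr. Qed.

Lemma expect1 M : expect 1%:M M = Re (\tr M).
Proof. by rewrite /expect mul1mx. Qed.

Lemma conjc_ip u w : (ip u w)^*%C = ip w u.
Proof.
rewrite !ipE rmorph_sum; apply: eq_bigr => i _.
by rewrite rmorphM /= conjcK mulrC.
Qed.

Lemma expect_ketbra u w : expect (ketbra u) (ketbra w) = sqnormc (ip u w).
Proof.
rewrite /expect -Re_mulcJ conjc_ip !ipE mulr_suml; congr Re.
under [RHS]eq_bigr do rewrite mulr_sumr.
rewrite exchange_big; apply: eq_bigr => i _; rewrite mxE.
by apply: eq_bigr => j _; rewrite !ketbraE; ring.
Qed.

Lemma expect_ketbra_ge0 u M : psd M -> 0 <= expect (ketbra u) M.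
Proof.
case=> _ /(_ (fun i => u i 0)); rewrite lecE => /andP [_].
congr (_ <= _); rewrite /expect /mxtrace; congr Re.
under [RHS]eq_bigr do rewrite mxE; rewrite exchange_big.
by apply: eq_bigr => i _; apply: eq_bigr => j _; rewrite ketbraE; ring.
Qed.

End Expectation.

Section PositiveMaps.
Variable R : realType.
Local Notation C := R[i].

Lemma psd_ketbra n (w : 'cV[C]_n) : psd (ketbra w).
Proof.
split=> [i j|v]; first by rewrite !ketbraE conjcM conjcK mulrC.
set z := \sum_i (v i)^*%C * w i 0.
have -> : \sum_i \sum_j (v i)^*%C * ketbra w i j * v j = z * z^*%C.
  rewrite rmorph_sum mulr_suml; apply: eq_bigr => i _.
  rewrite mulr_sumr; apply: eq_bigr => j _.
  by rewrite ketbraE rmorphM /= conjcK; ring.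
exact: mulcJ_ge0.
Qed.

Lemma psdZ n (r : R) (M : 'M[C]_n) : 0 <= r -> psd M -> psd (r%:C *: M).
Proof.
move=> r_ge0 [herm pos]; split=> [i j|v]; first by rewrite !mxE herm conjcM conjc_real.
have -> : \sum_i \sum_j (v i)^*%C * (r%:C *: M) i j * v j =
          r%:C * \sum_i \sum_j (v i)^*%C * M i j * v j.
  rewrite mulr_sumr; apply: eq_bigr => i _; rewrite mulr_sumr.
  by apply: eq_bigr => j _; rewrite mxE; ring.
by apply: mulr_ge0; [rewrite ler0c | exact: pos].
Qed.

Lemma sum_pair_ord1 (V : nmodType) n (F : 'I_1 * 'I_n -> V) : \sum_a F a = \sum_i F (ord0, i).
Proof.
rewrite (eq_bigr (fun a => F (a.1, a.2))); last by case.
by rewrite -(pair_bigA _ (fun x i => F (x, i))) /= big_ord1.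
Qed.

Lemma completely_positive_psd (L : 'M[C]_4 -> 'M[C]_4) X :
  completely_positive L -> psd X -> psd (L X).
Proof.
move=> cpL [herm pos].
have X_eta : \matrix_(i, j) X i j = X by apply/matrixP => i j; rewrite mxE.
have [] := cpL 1%N (fun a b => X a.2 b.2).
  split=> [a b|v]; first exact: herm.
  rewrite sum_pair_ord1; under eq_bigr do rewrite sum_pair_ord1.
  exact: (pos (fun i => v (ord0, i))).
rewrite /ampliate /= X_eta => hermL posL; split=> [i j|w].
  exact: (hermL (ord0, i) (ord0, j)).
have := posL (fun a => w a.2).
by rewrite sum_pair_ord1; under eq_bigr do rewrite sum_pair_ord1.
Qed.

End PositiveMaps.

Section Qubits.
Variable R : realType.
Local Notation C := R[i].
Implicit Types (x y z w : C) (p q : 'cV[C]_2).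

Definition col2 x y : 'cV[C]_2 := \col_i (if i == 0 :> nat then x else y).
Definition v4 (a b c d : C) : 'cV[C]_4 := \col_i nth 0 [:: a; b; c; d] i.

Definition rv4 (a b c d : R) : 'cV[C]_4 := v4 a%:C b%:C c%:C d%:C.

Lemma col2_eta p : p = col2 (p 0 0) (p 1 0).
Proof.
apply/matrixP => i j; rewrite mxE [j]ord1.
by case: i => [[|[|?]] Hi] //=; congr (p _ _); apply: val_inj.
Qed.

Lemma tens_col2 x y z w : col2 x y *t col2 z w = v4 (x * z) (x * w) (y * z) (y * w).
Proof. by apply/matrixP => i j; rewrite !mxE; case: i => [[|[|[|[|?]]]] Hi]. Qed.

Lemma adjmx_tens m n k l (A : 'M[C]_(m, n)) (B : 'M[C]_(k, l)) :
  adjmx (A *t B) = adjmx A *t adjmx B.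
Proof.
apply/matrixP => i j.
case: (mxtens_indexP i) => [ia ib]; case: (mxtens_indexP j) => [ja jb].
by rewrite tensmxE !mxE !mxtens_indexK rmorphM.
Qed.

Lemma ketbra_tens m n (u : 'cV[C]_m) (v : 'cV[C]_n) : ketbra u *t ketbra v = ketbra (u *t v).
Proof. by rewrite /ketbra -tensmx_mul -adjmx_tens. Qed.

Lemma ip_v4 (a b c d e f g h : C) :
  ip (v4 a b c d) (v4 e f g h) = a^*%C * e + b^*%C * f + c^*%C * g + d^*%C * h.
Proof. by rewrite ipE !big_ord_recr big_ord0 /= !mxE /= add0r. Qed.

Lemma ip_rv4 (a b c d e f g h : R) :
  ip (rv4 a b c d) (rv4 e f g h) = (a * e + b * f + c * g + d * h)%:C.
Proof. by rewrite ip_v4 !conjc_real !rmorphD !rmorphM. Qed.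

Lemma ip_col2 x y z w : ip (col2 x y) (col2 z w) = x^*%C * z + y^*%C * w.
Proof. by rewrite ipE !big_ord_recr big_ord0 /= !mxE /= add0r. Qed.

Lemma unit_vec_col2 x y : unit_vec (col2 x y) <-> sqnormc x + sqnormc y = 1.
Proof.
rewrite /unit_vec -/(ip _ _) ip_col2; case: x y => [a b] [c d]; rewrite /sqnormc /=.
split=> [[<- _] | ab1]; first by ring.
by apply/eqP; rewrite eq_complex /= -ab1; apply/andP; split; apply/eqP; ring.
Qed.

Lemma sqnormc_realM (r : R) z : sqnormc (r%:C * z) = r ^+ 2 * sqnormc z.
Proof. by case: z => a b; rewrite /sqnormc /=; ring. Qed.

Lemma product_separable p q : unit_vec p -> unit_vec q -> separable (ketbra p *t ketbra q).
Proof.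
move=> unit_p unit_q; exists 1%N, (fun _ => 1), (fun _ => ketbra p *t ketbra q).
by rewrite !big_ord1 scale1r; split=> //; split=> //; split=> // _; exists p, q.
Qed.

Lemma separable_expect_le (P M : 'M[C]_4) (c : R) :
  (forall p q, unit_vec p -> unit_vec q -> expect P (ketbra p *t ketbra q) <= c) ->
  separable M -> expect P M <= c.
Proof.
move=> prod_le [n [t [S [t_ge0 [t1 [prodS ->]]]]]].
rewrite expect_sumr -[c]mul1r -t1 mulr_suml; apply: ler_sum => k _.
have [p [q [unit_p [unit_q ->]]]] := prodS k.
by rewrite ler_wpM2l ?prod_le.
Qed.

Definition dephased (x y z w : R) : 'M[C]_4 :=
  ketbra (rv4 x 0 0 y) + (z ^+ 2)%:C *: ketbra (ket01 R) + (w ^+ 2)%:C *: ketbra (ket10 R).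

(* Separately elaborated occurrences of ['i] need not be syntactically equal, which
   defeats [ring]; a named constant avoids this. *)
Definition imag_unit : C := 'i.

Lemma imag_unit_sqr : imag_unit * imag_unit = -1.
Proof. by rewrite -expr2 sqr_i. Qed.

Lemma conjc_imag_unit : imag_unit^*%C = - imag_unit.
Proof. by apply/eqP; rewrite eq_complex /= oppr0 !eqxx. Qed.

Definition phase (k : 'I_4) : C := nth 0 [:: 1; imag_unit; -1; - imag_unit] k.

(* Averaging over the phases w = 1, i, -1, -i of the product states
   (a0|0> + w a1|1>) (x) (b0|0> + w^* b1|1>) kills every coherence but |00><11|. *)
Lemma sum_phase_products (a0 a1 b0 b1 : R) :
  \sum_k ketbra (col2 a0%:C (a1%:C * phase k)) *t ketbra (col2 b0%:C (b1%:C * (phase k)^*%C))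
  = 4%:R *: dephased (a0 * b0) (a1 * b1) (a0 * b1) (a1 * b0).
Proof.
rewrite !big_ord_recr big_ord0 !ketbra_tens !tens_col2.
apply/matrixP => i j; rewrite !(ketbraE, mxE).
case: i => [[|[|[|[|?]]]] Hi] //; case: j => [[|[|[|[|?]]]] Hj] //.
all: cbn [nth nat_of_ord phase widen_ord ord_max].
all: rewrite ?(conjcM, conjcN, conjc_imag_unit, conjcK, conjc1, conjc0, conjc_real).
all: rewrite /= ?real_complexM ?rmorph0 ?rmorphXn; ring: imag_unit_sqr.
Qed.

Lemma sqnormc_conjc z : sqnormc z^*%C = sqnormc z.
Proof. by case: z => a b; rewrite /sqnormc /= sqrrN. Qed.

Lemma sqnormc_phase k : sqnormc (phase k) = 1.
Proof.
rewrite /phase /imag_unit /sqnormc.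
by case: k => [[|[|[|[|?]]]] Hk] //=; ring.
Qed.

Lemma dephased_separable (a0 a1 b0 b1 : R) :
  a0 ^+ 2 + a1 ^+ 2 = 1 -> b0 ^+ 2 + b1 ^+ 2 = 1 ->
  separable (dephased (a0 * b0) (a1 * b1) (a0 * b1) (a1 * b0)).
Proof.
move=> a_unit b_unit.
exists 4%N, (fun _ => 4%:R^-1), (fun k => ketbra (col2 a0%:C (a1%:C * phase k)) *t
                                      ketbra (col2 b0%:C (b1%:C * (phase k)^*%C))).
split=> [k|]; first by rewrite invr_ge0.
split; first by rewrite sumr_const card_ord -[_ *+ 4]mulr_natr mulVf ?pnatr_eq0.
split=> [k|]; first exists (col2 a0%:C (a1%:C * phase k)), (col2 b0%:C (b1%:C * (phase k)^*%C)).
  by rewrite !unit_vec_col2 !sqnormc_realM !sqnormc_real sqnormc_conjc sqnormc_phase !mulr1.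
rewrite -scaler_sumr sum_phase_products scalerA -(rmorph_nat (real_complex R)) -rmorphM.
by rewrite mulVf ?scale1r ?pnatr_eq0.
Qed.

Lemma unit_vec_basis (b : bool) : unit_vec (col2 (~~ b)%:R b%:R).
Proof. by rewrite unit_vec_col2; case: b; rewrite /sqnormc /=; ring. Qed.

Lemma separable_ket (k : 'I_4) : separable (ketbra (ket R k)).
Proof.
suff [b [b' ->]] : exists b b' : bool, ket R k = col2 (~~ b)%:R b%:R *t col2 (~~ b')%:R b'%:R.
  by have := product_separable (unit_vec_basis b) (unit_vec_basis b'); rewrite ketbra_tens.
case: k => [[|[|[|[|?]]]] Hk] //;
  [exists false, false | exists false, true | exists true, false | exists true, true].
all: rewrite tens_col2; apply/matrixP => i j; rewrite !mxE [j]ord1.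
all: by case: i => [[|[|[|[|?]]]] ?] //=; ring.
Qed.

End Qubits.

Section BellStates.
Variable R : realType.
Local Notation C := R[i].

(* [phi k] is sqrt 2 |Phi_k>, unnormalised to avoid square roots. *)
Definition phi1 : 'cV[C]_4 := rv4 1 0 0 1.
Definition phi2 : 'cV[C]_4 := rv4 1 0 0 (-1).
Definition phi3 : 'cV[C]_4 := rv4 0 1 1 0.
Definition phi4 : 'cV[C]_4 := rv4 0 (-1) 1 0.

Lemma inv2C : (2%:R : C)^-1 = (2^-1 : R)%:C.
Proof. by rewrite fmorphV rmorph_nat. Qed.

Lemma Bell1E : Bell1 R = (2%:R)^-1 *: ketbra phi1.
Proof.
rewrite /Bell1; congr (_ *: ketbra _); apply/matrixP => i j; rewrite !mxE [j]ord1.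
by case: i => [[|[|[|[|?]]]] ?] //=;
  rewrite ?(addr0, add0r, subr0, sub0r, oppr0, rmorph0, rmorph1, rmorphN1).
Qed.

Lemma Bell2E : Bell2 R = (2%:R)^-1 *: ketbra phi2.
Proof.
rewrite /Bell2; congr (_ *: ketbra _); apply/matrixP => i j; rewrite !mxE [j]ord1.
by case: i => [[|[|[|[|?]]]] ?] //=;
  rewrite ?(addr0, add0r, subr0, sub0r, oppr0, rmorph0, rmorph1, rmorphN1).
Qed.

Lemma Bell3E : Bell3 R = (2%:R)^-1 *: ketbra phi3.
Proof.
rewrite /Bell3; congr (_ *: ketbra _); apply/matrixP => i j; rewrite !mxE [j]ord1.
by case: i => [[|[|[|[|?]]]] ?] //=;
  rewrite ?(addr0, add0r, subr0, sub0r, oppr0, rmorph0, rmorph1, rmorphN1).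
Qed.

Lemma Bell4E : Bell4 R = (2%:R)^-1 *: ketbra phi4.
Proof.
rewrite /Bell4; congr (_ *: ketbra _); apply/matrixP => i j; rewrite !mxE [j]ord1.
by case: i => [[|[|[|[|?]]]] ?] //=;
  rewrite ?(addr0, add0r, subr0, sub0r, oppr0, rmorph0, rmorph1, rmorphN1).
Qed.

Lemma Bell_sum : Bell1 R + Bell2 R + Bell3 R + Bell4 R = 1%:M.
Proof.
rewrite Bell1E Bell2E Bell3E Bell4E; apply/matrixP => i j; rewrite !(ketbraE, mxE).
case: i => [[|[|[|[|?]]]] ?] //; case: j => [[|[|[|[|?]]]] ?] //.
all: cbn [nth nat_of_ord]; rewrite !conjc_real ?(rmorph0, rmorph1, rmorphN1).
all: by rewrite /=; field.
Qed.

Lemma ketbra_rv4_Bell1 (x : R) : ketbra (rv4 x 0 0 x) = (2 * x ^+ 2)%:C *: Bell1 R.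
Proof.
rewrite Bell1E; apply/matrixP => i j; rewrite !(ketbraE, mxE).
case: i => [[|[|[|[|?]]]] ?] //; case: j => [[|[|[|[|?]]]] ?] //.
all: cbn [nth nat_of_ord]; rewrite !conjc_real ?(rmorph0, rmorph1, rmorphN1).
all: rewrite ?(real_complexM, rmorphXn, rmorph_nat); by field.
Qed.

Lemma ketbra_rv4_Bell2 (x : R) : ketbra (rv4 x 0 0 (- x)) = (2 * x ^+ 2)%:C *: Bell2 R.
Proof.
rewrite Bell2E; apply/matrixP => i j; rewrite !(ketbraE, mxE).
case: i => [[|[|[|[|?]]]] ?] //; case: j => [[|[|[|[|?]]]] ?] //.
all: cbn [nth nat_of_ord]; rewrite !conjc_real ?(rmorph0, rmorph1, rmorphN1, rmorphN).
all: rewrite ?(real_complexM, rmorphXn, rmorph_nat); by field.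
Qed.

Lemma Bell1_add_Bell2 : Bell1 R + Bell2 R = ketbra (ket00 R) + ketbra (ket11 R).
Proof.
rewrite Bell1E Bell2E; apply/matrixP => i j; rewrite !(ketbraE, mxE).
case: i => [[|[|[|[|?]]]] ?] //; case: j => [[|[|[|[|?]]]] ?] //.
all: cbn [nth nat_of_ord]; rewrite !conjc_real ?(rmorph0, rmorph1, rmorphN1).
all: by rewrite /=; field.
Qed.

Lemma sqrt_unit_pair (x : R) : 0 <= x <= 1 ->
  exists c s : R, [/\ c ^+ 2 + s ^+ 2 = 1, c ^+ 2 = 1 - x & s ^+ 2 = x].
Proof.
case/andP => x_ge0 x_le1; exists (Num.sqrt (1 - x)), (Num.sqrt x).
by rewrite !sqr_sqrtr ?subr_ge0 // subrK.
Qed.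

Lemma separable_Bell1_mixture (x : R) : 0 <= x <= 1 ->
  separable ((2 * (x * (1 - x)))%:C *: Bell1 R
             + ((1 - x) ^+ 2)%:C *: ketbra (ket01 R) + (x ^+ 2)%:C *: ketbra (ket10 R)).
Proof.
case/sqrt_unit_pair => c [s [cs1 c2 s2]].
have := dephased_separable cs1 (etrans (addrC _ _) cs1).
rewrite /dephased [s * c]mulrC ketbra_rv4_Bell1 !exprMn c2 s2.
by rewrite -!expr2 [(1 - x) * x]mulrC.
Qed.

Lemma separable_Bell2_mixture (x : R) : 0 <= x <= 1 ->
  separable ((2 * (x * (1 - x)))%:C *: Bell2 R
             + ((1 - x) ^+ 2)%:C *: ketbra (ket01 R) + (x ^+ 2)%:C *: ketbra (ket10 R)).
Proof.
case/sqrt_unit_pair => c [s [cs1 c2 s2]].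
have := @dephased_separable _ c s s (- c) cs1; rewrite sqrrN addrC => /(_ cs1).
rewrite /dephased !mulrN [s * c]mulrC ketbra_rv4_Bell2 sqrrN !exprMn c2 s2.
by rewrite -!expr2 [(1 - x) * x]mulrC.
Qed.

Lemma unit_vec_sqnormc (p : 'cV[C]_2) : unit_vec p -> sqnormc (p 0 0) + sqnormc (p 1 0) = 1.
Proof. by rewrite {1}(col2_eta p) unit_vec_col2. Qed.

Lemma sqnormc_product_le (p : 'cV[C]_2) (x y : C) :
  unit_vec p -> sqnormc x + sqnormc y = 1 -> sqnormc (p 0 0 * x + p 1 0 * y) <= 1.
Proof.
move=> /unit_vec_sqnormc p1 xy1.
by have := sqnormc_dot2_le (p 0 0) (p 1 0) x y; rewrite p1 xy1 mul1r.
Qed.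

Lemma separable_expect_half_le (u : 'cV[C]_4) (M : 'M[C]_4) :
  (forall p q : 'cV[C]_2, unit_vec p -> unit_vec q -> sqnormc (ip u (p *t q)) <= 1) ->
  separable M -> expect ((2%:R)^-1 *: ketbra u) M <= 2^-1.
Proof.
move=> ip_le; apply: separable_expect_le => p q unit_p unit_q.
rewrite inv2C expectZl ketbra_tens expect_ketbra ler_piMr ?invr_ge0 ?ler0n //.
exact: ip_le.
Qed.

Lemma separable_Bell1_le (M : 'M[C]_4) : separable M -> expect (Bell1 R) M <= 2^-1.
Proof.
rewrite Bell1E; apply: separable_expect_half_le => p q unit_p unit_q.
rewrite {1}(col2_eta p) {1}(col2_eta q) tens_col2 /phi1 /rv4 ip_v4 !conjc_real rmorph0 rmorph1.
rewrite !mul1r !mul0r !addr0; apply: sqnormc_product_le => //.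
exact: unit_vec_sqnormc.
Qed.

Lemma separable_Bell2_le (M : 'M[C]_4) : separable M -> expect (Bell2 R) M <= 2^-1.
Proof.
rewrite Bell2E; apply: separable_expect_half_le => p q unit_p unit_q.
rewrite {1}(col2_eta p) {1}(col2_eta q) tens_col2 /phi2 /rv4 ip_v4 !conjc_real rmorph0 rmorph1.
rewrite rmorphN1 !mul1r !mul0r !addr0 mulN1r -mulrN; apply: sqnormc_product_le => //.
by rewrite sqnormcN; apply: unit_vec_sqnormc.
Qed.

Lemma separable_Bell3_le (M : 'M[C]_4) : separable M -> expect (Bell3 R) M <= 2^-1.
Proof.
rewrite Bell3E; apply: separable_expect_half_le => p q unit_p unit_q.
rewrite {1}(col2_eta p) {1}(col2_eta q) tens_col2 /phi3 /rv4 ip_v4 !conjc_real rmorph0 rmorph1.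
rewrite !mul1r !mul0r addr0 add0r; apply: sqnormc_product_le => //.
by rewrite addrC; apply: unit_vec_sqnormc.
Qed.

Lemma expect_Bell_pair (u w : 'cV[C]_4) :
  expect ((2%:R)^-1 *: ketbra u) ((2%:R)^-1 *: ketbra w) = 4^-1 * sqnormc (ip u w).
Proof. by rewrite inv2C expectZl expectZr expect_ketbra mulrA -invfM -natrM. Qed.

Lemma expect_Bell_combination (u w1 w2 w3 : 'cV[C]_4) (a1 a2 a3 : R) :
  expect ((2%:R)^-1 *: ketbra u) (a1%:C *: ((2%:R)^-1 *: ketbra w1)
    + a2%:C *: ((2%:R)^-1 *: ketbra w2) + a3%:C *: ((2%:R)^-1 *: ketbra w3))
  = 4^-1 * (a1 * sqnormc (ip u w1) + a2 * sqnormc (ip u w2) + a3 * sqnormc (ip u w3)).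
Proof. by rewrite expect_comb3 !expect_Bell_pair; field. Qed.

Section SigmaFidelities.
Variables l1 l2 l3 : R.

Lemma expect_Bell1_sigma : expect (Bell1 R) (sigma_l l1 l2 l3) = l1.
Proof.
rewrite /sigma_l Bell1E Bell2E Bell3E expect_Bell_combination.
by rewrite !ip_rv4 !sqnormc_real; field.
Qed.

Lemma expect_Bell2_sigma : expect (Bell2 R) (sigma_l l1 l2 l3) = l2.
Proof.
rewrite /sigma_l Bell1E Bell2E Bell3E expect_Bell_combination.
by rewrite !ip_rv4 !sqnormc_real; field.
Qed.

Lemma expect_Bell4_sigma : expect (Bell4 R) (sigma_l l1 l2 l3) = 0.
Proof.
rewrite /sigma_l Bell1E Bell2E Bell3E Bell4E expect_Bell_combination.
by rewrite !ip_rv4 !sqnormc_real; field.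
Qed.

End SigmaFidelities.

Lemma trace_ketbra n (u : 'cV[C]_n) : \tr (ketbra u) = ip u u.
Proof. by rewrite /ketbra mxtrace_mulC /mxtrace big_ord1. Qed.

Lemma Re_trace_Bell1 : Re (\tr (Bell1 R)) = 1.
Proof. by rewrite Bell1E inv2C mxtraceZ trace_ketbra ip_rv4 Re_realM /=; field. Qed.

Lemma Re_trace_ket (k : 'I_4) : Re (\tr (ketbra (ket R k))) = 1.
Proof.
rewrite trace_ketbra ipE (bigD1 k) //= big1 => [|i /negbTE neq_ik].
all: rewrite /ket !mxE ?neq_ik ?eqxx /=.
- by ring.
- exact: mulr0.
Qed.

Lemma expect_Bell_sum (N : 'M[C]_4) :
  expect (Bell1 R) N + expect (Bell2 R) N + expect (Bell3 R) N + expect (Bell4 R) N = Re (\tr N).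
Proof. by rewrite -!expectDl Bell_sum expect1. Qed.

Lemma expect_Bell_ge0 (N : 'M[C]_4) : psd N ->
  [/\ 0 <= expect (Bell1 R) N, 0 <= expect (Bell2 R) N,
      0 <= expect (Bell3 R) N & 0 <= expect (Bell4 R) N].
Proof.
move=> psdN; rewrite Bell1E Bell2E Bell3E Bell4E inv2C !expectZl.
by split; apply: mulr_ge0; rewrite ?invr_ge0 ?ler0n //; apply: expect_ketbra_ge0.
Qed.

Lemma psd_Bell1 : psd (Bell1 R).
Proof. by rewrite Bell1E inv2C; apply: psdZ; rewrite ?invr_ge0 ?ler0n //; apply: psd_ketbra. Qed.

Lemma psd_Bell2 : psd (Bell2 R).
Proof. by rewrite Bell2E inv2C; apply: psdZ; rewrite ?invr_ge0 ?ler0n //; apply: psd_ketbra. Qed.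

End BellStates.

Section FidelityArithmetic.
Variable R : realFieldType.

(* The bound that [separable_Bell1_mixture] and [separable_Bell2_mixture] impose on
   the fidelities of their images. *)
Definition mixture_bounded (a t t' : R) :=
  forall x, 0 <= x <= 1 -> 2 * (x * (1 - x)) * a + (1 - x) ^+ 2 * t + x ^+ 2 * t' <= 2^-1.

Lemma mixture_bounded_half a t t' : mixture_bounded a t t' -> 2 * a + t + t' <= 2.
Proof.
by move=> /(_ 2^-1); rewrite invr_ge0 ler0n invf_le1 ?ler1n ?ltr0n //; move/(_ isT); lra.
Qed.

Lemma mixture_bounded_le_half b t' : 0 <= t' -> mixture_bounded b 2^-1 t' -> b <= 2^-1.
Proof.
move=> t'_ge0 mixb; rewrite leNgt; apply/negP => b_gt.
(* Any 0 < x < (4b - 2)/(4b - 1) violates the bound. *)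
pose x := (2 * b - 1) / (4 * b - 1).
have x_gt0 : 0 < x by rewrite divr_gt0 //; lra.
have x_lt1 : x < 1 by rewrite ltr_pdivrMr; lra.
have := mixb x; rewrite (ltW x_gt0) (ltW x_lt1) => /(_ isT) bound.
have xt'_ge0 : 0 <= x ^+ 2 * t' by rewrite mulr_ge0 ?sqr_ge0.
have : x * (4 * (1 - x) * b) <= x * (2 - x) by lra.
rewrite ler_pM2l // => key.
have x_def : x * (4 * b - 1) = 2 * b - 1 by rewrite divfK //; lra.
lra.
Qed.

(* a_k, b_k, t_k, t'_k stand for <Phi_k|L X|Phi_k> with X = Phi_1, Phi_2, |01><01|,
   |10><10| respectively. *)
Lemma Bell_fidelities_inconsistent (l1 l2 l3 a1 a2 a3 a4 b1 b2 b4 t1 t2 t3 t4 t1' t2' : R) :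
  0 < l3 -> l3 < l2 -> 2 * l2 < l1 - l3 ->
  l1 * a1 + l2 * t1 + l3 * b1 = l1 ->
  l1 * a2 + l2 * t2 + l3 * b2 = l2 ->
  l1 * a4 + l2 * t4 + l3 * b4 = 0 ->
  a1 + a2 + a3 + a4 = 1 -> t1 + t2 + t3 + t4 = 1 ->
  0 <= a2 -> 0 <= a3 -> 0 <= a4 -> 0 <= b4 -> 0 <= t1 -> 0 <= t4 -> 0 <= t1' -> 0 <= t2' ->
  a1 + b1 <= 1 -> t2 <= 2^-1 -> t3 <= 2^-1 ->
  mixture_bounded a1 t1 t1' -> mixture_bounded b2 t2 t2' -> False.
Proof.
move=> l3_gt0 l3_lt_l2 gap row1 row2 row4 tr_a tr_t a2_ge0 a3_ge0 a4_ge0 b4_ge0 t1_ge0 t4_ge0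
  t1'_ge0 t2'_ge0 ab1_le t2_le t3_le /mixture_bounded_half mix1.
have l13_gt0 : 0 < l1 - l3 by lra.
have lb1_le : l3 * b1 <= l3 * (1 - a1) by rewrite ler_pM2l //; lra.
have lt1_le : (l1 - l3) * t1 <= (l1 - l3) * (2 * (1 - a1)) by rewrite ler_pM2l //; lra.
have : (l1 - l3 - 2 * l2) * t1 <= 0 by lra.
rewrite pmulr_rle0; last by lra.
move=> t1_le0; have t1_eq0 : t1 = 0 by lra.
have : (l1 - l3) * (1 - a1) <= 0 by rewrite t1_eq0 mulr0 addr0 in row1; lra.
rewrite pmulr_rle0 // => a1_ge1; have [a2_eq0 a4_eq0] : a2 = 0 /\ a4 = 0 by lra.
have : l2 * t4 = 0.
  have : 0 <= l2 * t4 by rewrite mulr_ge0 //; lra.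
  have : 0 <= l3 * b4 by rewrite mulr_ge0 //; lra.
  by rewrite a4_eq0 mulr0 add0r in row4; lra.
move/eqP; rewrite mulf_eq0 gt_eqF /= => [/eqP t4_eq0|]; last by lra.
have t2_eq : t2 = 2^-1 by lra.
rewrite t2_eq => /(mixture_bounded_le_half t2'_ge0) b2_le.
have : l3 * b2 <= l3 * 2^-1 by rewrite ler_pM2l.
by rewrite a2_eq0 t2_eq mulr0 add0r in row2; lra.
Qed.

End FidelityArithmetic.

Section NonEntanglingMap.
Variables (R : realType) (L : 'M[R[i]]_4 -> 'M[R[i]]_4).
Hypothesis L_NE : non_entangling L.
Local Notation C := R[i].

Let L_linear : linear_map L := L_NE.1.1.

Let L_zero : L 0 = 0.
Proof.
have L00 := L_linear 1 0 0; rewrite !scale1r !addr0 in L00.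
by apply: (addrI (L 0)); rewrite addr0 -L00.
Qed.

Lemma non_entangling_add A B : L (A + B) = L A + L B.
Proof. by rewrite -{1}[A]scale1r L_linear scale1r. Qed.

Lemma non_entangling_comb3 (a1 a2 a3 : R) (M1 M2 M3 : 'M[C]_4) :
  L (a1%:C *: M1 + a2%:C *: M2 + a3%:C *: M3) = a1%:C *: L M1 + a2%:C *: L M2 + a3%:C *: L M3.
Proof.
have L_scale a M : L (a *: M) = a *: L M by rewrite -[a *: M]addr0 L_linear L_zero addr0.
by rewrite !non_entangling_add !L_scale.
Qed.

Lemma expect_non_entangling_comb3 P (a1 a2 a3 : R) (M1 M2 M3 : 'M[C]_4) :
  expect P (L (a1%:C *: M1 + a2%:C *: M2 + a3%:C *: M3))
  = a1 * expect P (L M1) + a2 * expect P (L M2) + a3 * expect P (L M3).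
Proof. by rewrite non_entangling_comb3 expect_comb3. Qed.

Lemma expect_non_entangling_ge0 M : psd M ->
  [/\ 0 <= expect (Bell1 R) (L M), 0 <= expect (Bell2 R) (L M),
      0 <= expect (Bell3 R) (L M) & 0 <= expect (Bell4 R) (L M)].
Proof.
by move=> psdM; apply/expect_Bell_ge0/completely_positive_psd => //; case: L_NE => [[_ []]].
Qed.

Lemma expect_non_entangling_sum M :
  expect (Bell1 R) (L M) + expect (Bell2 R) (L M) + expect (Bell3 R) (L M)
  + expect (Bell4 R) (L M) = Re (\tr M).
Proof. by rewrite expect_Bell_sum; case: L_NE => [[_ [_ ->]]]. Qed.

Lemma expect_non_entangling_separable_le M : separable M ->
  [/\ expect (Bell1 R) (L M) <= 2^-1, expect (Bell2 R) (L M) <= 2^-1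
    & expect (Bell3 R) (L M) <= 2^-1].
Proof.
move=> /L_NE.2 sepLM.
by split; [apply: separable_Bell1_le | apply: separable_Bell2_le | apply: separable_Bell3_le].
Qed.

Local Notation f P M := (expect P (L M)).
Local Notation B1 := (Bell1 R).
Local Notation B2 := (Bell2 R).
Local Notation B4 := (Bell4 R).
Local Notation E01 := (ketbra (ket01 R)).
Local Notation E10 := (ketbra (ket10 R)).

Lemma Bell1_mixture_bounded : mixture_bounded (f B1 B1) (f B1 E01) (f B1 E10).
Proof.
move=> x /separable_Bell1_mixture /expect_non_entangling_separable_le [+ _ _].
by rewrite expect_non_entangling_comb3.
Qed.

Lemma Bell2_mixture_bounded : mixture_bounded (f B2 B2) (f B2 E01) (f B2 E10).
Proof.
move=> x /separable_Bell2_mixture /expect_non_entangling_separable_le [_ + _].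
by rewrite expect_non_entangling_comb3.
Qed.

Lemma Bell1_Bell2_le : f B1 B1 + f B1 B2 <= 1.
Proof.
rewrite -expectDr -non_entangling_add Bell1_add_Bell2 non_entangling_add expectDr.
have [le00 _ _] := expect_non_entangling_separable_le (separable_ket R (@Ordinal 4 0 isT)).
have [le11 _ _] := expect_non_entangling_separable_le (separable_ket R (@Ordinal 4 3 isT)).
by apply: le_trans (lerD le00 le11) _; rewrite [leRHS](splitr 1) mul1r.
Qed.

Lemma non_entangling_rho_neq_sigma (l1 l2 l3 : R) :
  0 < l3 -> l1 + l2 + l3 = 1 -> 1 < 2 * l1 - l2 -> l3 < l2 ->
  L (rho_l l1 l2 l3) <> sigma_l l1 l2 l3.
Proof.
move=> l3_gt0 l_sum l_gap l3_lt_l2 L_rho.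
have gap : 2 * l2 < l1 - l3 by lra.
have row P : l1 * f P B1 + l2 * f P E01 + l3 * f P B2 = expect P (sigma_l l1 l2 l3).
  by rewrite -L_rho expect_non_entangling_comb3.
have row1 := row B1; rewrite expect_Bell1_sigma in row1.
have row2 := row B2; rewrite expect_Bell2_sigma in row2.
have row4 := row B4; rewrite expect_Bell4_sigma in row4.
have tr_a := expect_non_entangling_sum B1; rewrite Re_trace_Bell1 in tr_a.
have tr_t := expect_non_entangling_sum E01; rewrite Re_trace_ket in tr_t.
have [_ a2_ge0 a3_ge0 a4_ge0] := expect_non_entangling_ge0 (psd_Bell1 R).
have [_ _ _ b4_ge0] := expect_non_entangling_ge0 (psd_Bell2 R).
have [t1_ge0 _ _ t4_ge0] := expect_non_entangling_ge0 (psd_ketbra (ket01 R)).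
have [t1'_ge0 t2'_ge0 _ _] := expect_non_entangling_ge0 (psd_ketbra (ket10 R)).
have [_ t2_le t3_le] := expect_non_entangling_separable_le (separable_ket R (@Ordinal 4 1 isT)).
exact: (Bell_fidelities_inconsistent l3_gt0 l3_lt_l2 gap row1 row2 row4 tr_a tr_t
  a2_ge0 a3_ge0 a4_ge0 b4_ge0 t1_ge0 t4_ge0 t1'_ge0 t2'_ge0 Bell1_Bell2_le t2_le t3_le
  Bell1_mixture_bounded Bell2_mixture_bounded).
Qed.

End NonEntanglingMap.

Unset Implicit Arguments.

Theorem theorem5 (R : realType) (l1 l2 l3 : R) :
  l2 <= l1 -> l3 <= l2 -> 0 < l3 -> l1 + l2 + l3 = 1 ->
  1 < 2 * l1 - l2 -> l3 < l2 ->
  ~ (exists L : 'M[R[i]]_4 -> 'M[R[i]]_4,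
       non_entangling L /\ L (rho_l l1 l2 l3) = sigma_l l1 l2 l3).
Proof.
(* The orderings l3 <= l2 <= l1 follow from the remaining hypotheses. *)
move=> _ _ l3_gt0 l_sum l_gap l3_lt_l2 [L [L_NE L_rho]].
exact: (non_entangling_rho_neq_sigma L_NE l3_gt0 l_sum l_gap l3_lt_l2 L_rho).
Qed.
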